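(* Almost all finite simple graphs have a $Deg$-mate. That is, if $\mathcal{G}(n)$ denotes the set of isomorphism classes of simple graphs on $n$ vertices and $U_{Deg}(n)\subseteq \mathcal{G}(n)$ the set of those $G$ which are $Deg$-unique, then $\lim_{n\to\infty} |U_{Deg}(n)|/|\mathcal{G}(n)| = 0$.
   Context: All graphs are finite, simple (undirected, no loops, no parallel edges). For a graph $G=(V,E)$ and $v\in V$, $\deg(v)$ is the degree of $v$. The degree polynomial is $Deg(G;x)=\sum_{v\in V} x^{\deg(v)}$. For a graph polynomial $P$ (a map assigning to each graph a polynomial, invariant under isomorphism), a graph $H$ is a $P$-mate of $G$ if $P(G)=P(H)$ but $H$ is not isomorphic to $G$; $G$ is $P$-unique if it has no $P$-mate. ''Almost all graphs'' means the proportion of (isomorphism classes of) graphs of order $n$ with the property tends to $1$ as $n\to\infty$. *)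

From HB Require Import structures.
From mathcomp Require Import all_boot all_order all_algebra.
From mathcomp Require Import all_classical all_reals all_analysis.
Set Implicit Arguments. Unset Strict Implicit. Unset Printing Implicit Defensive.
Import Order.TTheory GRing.Theory Num.Theory.
Local Open Scope ring_scope.

Definition graph (n : nat) := {ffun 'I_n * 'I_n -> bool}.

Definition simple_graph (n : nat) (g : graph n) : bool :=
  [forall x : 'I_n, forall y : 'I_n, (g (x, y) == g (y, x)) && ~~ g (x, x)].

Definition graph_iso (n m : nat) (g : graph n) (h : graph m) : Prop :=
  exists f : 'I_n -> 'I_m, bijective f /\
    forall x y : 'I_n, g (x, y) = h (f x, f y).

Definition vdeg (n : nat) (g : graph n) (v : 'I_n) : nat := #|[set u | g (v, u)]|.

Definition Deg (n : nat) (g : graph n) : {poly int} :=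
  \sum_(v : 'I_n) 'X^(vdeg g v).

Definition Deg_mate (n m : nat) (g : graph n) (h : graph m) : Prop :=
  simple_graph h /\ Deg h = Deg g /\ ~ graph_iso g h.

Definition Deg_unique (n : nat) (g : graph n) : Prop :=
  ~ exists (m : nat) (h : graph m), Deg_mate g h.

Definition iso_class (n : nat) (g : graph n) : {set graph n} :=
  [set h : graph n | simple_graph h && `[< graph_iso g h >]].

Definition iso_classes (n : nat) : {set {set graph n}} :=
  [set iso_class g | g in [set g : graph n | simple_graph g]].

Definition Deg_unique_classes (n : nat) : {set {set graph n}} :=
  [set C in iso_classes n | `[< forall g : graph n, g \in C -> Deg_unique g >]].

From HB Require Import structures.
From mathcomp Require Import all_boot all_order all_algebra.
From mathcomp Require Import all_classical all_reals all_analysis.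
From mathcomp Require Import zify.
Import Order.TTheory GRing.Theory Num.Theory.

(* A Deg-unique graph is determined up to isomorphism by its degree sequence,
   since any simple graph with the same degrees has the same degree polynomial;
   so at most (n+1)^n isomorphism classes on n vertices are Deg-unique.  On the
   other hand every simple graph is the pullback of its class representative
   along some map 'I_n -> 'I_n, so a class has at most n^n members, while the
   bipartite graphs between the two halves of 'I_n already give 2^(k^2) simple
   graphs, k = n/2; so there are at least 2^(k^2) / n^n classes.  The ratio
   is at most (n+1)^(2n) / 2^(k^2), which is below 1/(n+1) once n >= 640. *)

Set Implicit Arguments. Unset Strict Implicit.

Lemma graph_iso_refl n (g : graph n) : graph_iso g g.
Proof. by exists id; split; first exists id. Qed.

Lemma graph_iso_sym n m (g : graph n) (h : graph m) :
  graph_iso g h -> graph_iso h g.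
Proof.
move=> [f [[f' fK f'K] gh]]; exists f'; split; first by exists f.
by move=> x y; rewrite gh !f'K.
Qed.

Lemma graph_iso_trans n m p (g : graph n) (h : graph m) (k : graph p) :
  graph_iso g h -> graph_iso h k -> graph_iso g k.
Proof.
move=> [f1 [bij1 gh]] [f2 [bij2 hk]]; exists (f2 \o f1); split.
  exact: bij_comp.
by move=> x y; rewrite gh hk.
Qed.

Lemma iso_class_eq n (g h : graph n) :
  graph_iso g h -> iso_class g = iso_class h.
Proof.
move=> gh; apply/setP=> k; rewrite !inE; case: (simple_graph k) => //=.
apply/asboolP/asboolP; first exact: graph_iso_trans (graph_iso_sym gh).
exact: graph_iso_trans gh.
Qed.

Lemma mem_iso_class n (g : graph n) : simple_graph g -> g \in iso_class g.
Proof. by move=> sg; rewrite inE sg; apply/asboolP/graph_iso_refl. Qed.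

Lemma simple_graph0 n : simple_graph ([ffun=> false] : graph n).
Proof. by apply/forallP=> x; apply/forallP=> y; rewrite !ffunE. Qed.

Lemma iso_classes_gt0 n : 0 < #|iso_classes n|.
Proof.
apply/card_gt0P; exists (iso_class ([ffun=> false] : graph n)).
by apply: imset_f; rewrite inE simple_graph0.
Qed.

Definition class_repr n (C : {set graph n}) : graph n :=
  odflt [ffun=> false] [pick g in C].

Section ClassRepresentative.

Variables (n : nat) (C : {set graph n}).
Hypothesis C_class : C \in iso_classes n.

Lemma class_repr_in : class_repr C \in C.
Proof.
case/imsetP: C_class => g; rewrite inE => sg ->.
rewrite /class_repr; case: pickP => [//|/(_ g)].
by rewrite mem_iso_class.
Qed.

Lemma simple_class_repr : simple_graph (class_repr C).
Proof. by have := class_repr_in; case/imsetP: C_class => g _ ->; case/setIdP. Qed.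

Lemma iso_class_repr : C = iso_class (class_repr C).
Proof.
have := class_repr_in; case/imsetP: C_class => g _ ->.
by rewrite inE => /andP[_ /asboolP /iso_class_eq].
Qed.

End ClassRepresentative.

Lemma vdeg_le n (g : graph n) (v : 'I_n) : vdeg g v <= n.
Proof. by rewrite -[n in _ <= n]card_ord max_card. Qed.

Lemma eq_Deg n (g h : graph n) : vdeg g =1 vdeg h -> Deg g = Deg h.
Proof. by move=> eq_gh; apply: eq_bigr => v _; rewrite eq_gh. Qed.

Lemma Deg_unique_iso n m (g : graph n) (h : graph m) :
  Deg_unique g -> simple_graph h -> Deg h = Deg g -> graph_iso g h.
Proof. by move=> ug sh eqD; apply: contrapT => not_iso; apply: ug; exists m, h. Qed.

Definition deg_seq n (g : graph n) : {ffun 'I_n -> 'I_n.+1} :=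
  [ffun v => inord (vdeg g v)].

Lemma deg_seqE n (g : graph n) (v : 'I_n) : deg_seq g v = vdeg g v :> nat.
Proof. by rewrite ffunE inordK // ltnS vdeg_le. Qed.

Lemma card_Deg_unique_classes_le n : #|Deg_unique_classes n| <= n.+1 ^ n.
Proof.
have inj_deg_seq :
    {in Deg_unique_classes n &, injective (fun C => deg_seq (class_repr C))}.
  move=> C1 C2; rewrite !inE => /andP[C1_class /asboolP C1_unique].
  move=> /andP[C2_class /asboolP C2_unique] /= eq_seq.
  have eqD : Deg (class_repr C2) = Deg (class_repr C1).
    by apply: eq_Deg => v; rewrite -!deg_seqE eq_seq.
  rewrite (iso_class_repr C1_class) (iso_class_repr C2_class).
  apply/iso_class_eq/Deg_unique_iso => //; first exact: C1_unique (class_repr_in _).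
  exact: simple_class_repr.
rewrite -(card_in_imset inj_deg_seq).
by apply: leq_trans (max_card _) _; rewrite card_ffun !card_ord.
Qed.

Definition simple_graphs n : {set graph n} := [set g : graph n | simple_graph g].

Lemma card_simple_graphs_le n : #|simple_graphs n| <= #|iso_classes n| * n ^ n.
Proof.
pose pullback (q : {set graph n} * {ffun 'I_n -> 'I_n}) : graph n :=
  [ffun p => class_repr q.1 (q.2 p.1, q.2 p.2)].
have sub : simple_graphs n \subset
    pullback @: finset.setX (iso_classes n) [set: {ffun 'I_n -> 'I_n}].
  apply/fintype.subsetP => g; rewrite inE => sg.
  have g_class : iso_class g \in iso_classes n by apply: imset_f; rewrite inE.
  have := class_repr_in g_class; rewrite inE => /andP[_ /asboolP [f [_ gf]]].
  apply/imsetP; exists (iso_class g, finfun f).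
    by rewrite finset.in_setX g_class finset.in_setT.
  by apply/ffunP => -[x y]; rewrite !ffunE gf.
apply: leq_trans (subset_leq_card sub) _; apply: leq_trans (leq_imset_card _ _) _.
by rewrite finset.cardsX finset.cardsT card_ffun !card_ord.
Qed.

Definition ord_rel k (f : {ffun 'I_k * 'I_k -> bool}) (a b : nat) : bool :=
  if insub a is Some i then if insub b is Some j then f (i, j) else false
  else false.

Lemma ord_relE k f (i j : 'I_k) : ord_rel f i j = f (i, j).
Proof. by rewrite /ord_rel !valK. Qed.

(* A relation f on 'I_k becomes the bipartite graph joining i < k to j + k. *)
Definition bipartite_graph n k (f : {ffun 'I_k * 'I_k -> bool}) : graph n :=
  [ffun p : 'I_n * 'I_n =>
     [&& p.1 < k, k <= p.2 & ord_rel f p.1 (p.2 - k)] ||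
     [&& p.2 < k, k <= p.1 & ord_rel f p.2 (p.1 - k)]].

Lemma simple_bipartite_graph n k f : simple_graph (@bipartite_graph n k f).
Proof.
apply/forallP => x; apply/forallP => y; rewrite !ffunE /= orbC eqxx /=.
by case: ltnP => //= x_lt_k; rewrite leqNgt x_lt_k.
Qed.

Lemma bipartite_graph_inj n k : k + k <= n -> injective (@bipartite_graph n k).
Proof.
move=> kk f1 f2 eq_f; apply/ffunP => -[i j].
have i_lt_n : i < n by have := ltn_ord i; lia.
have jk_lt_n : j + k < n by have := ltn_ord j; lia.
have := congr1 (fun g : graph n => g (Ordinal i_lt_n, Ordinal jk_lt_n)) eq_f.
by rewrite !ffunE /= ltn_ord leq_addl addnK !ord_relE ltnNge leq_addl /= !orbF.
Qed.

Lemma card_simple_graphs_ge n : 2 ^ (n./2 * n./2) <= #|simple_graphs n|.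
Proof.
have kk : n./2 + n./2 <= n.
  by rewrite addnn -[X in _ <= X](odd_double_half n) leq_addl.
have sub : @bipartite_graph n n./2 @: [set: {ffun 'I_n./2 * 'I_n./2 -> bool}]
             \subset simple_graphs n.
  by apply/fintype.subsetP => g /imsetP[f _ ->]; rewrite inE simple_bipartite_graph.
apply: leq_trans (subset_leq_card sub).
rewrite card_imset; last exact: bipartite_graph_inj.
by rewrite finset.cardsT card_ffun card_bool card_prod !card_ord.
Qed.

Lemma exp2_ge_64_succn j : 10 <= j -> 64 * j.+1 <= 2 ^ j.
Proof.
elim: j => // j IHj; rewrite leq_eqVlt => /orP[/eqP <- //|].
by rewrite ltnS => /IHj; rewrite expnS; lia.
Qed.

(* With j = n %/ 64 we get n.+1 <= 2^j, and j * (2n + 1) <= (n/2)^2. *)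
Lemma exp_succn_le_exp2_half_sq n :
  640 <= n -> n.+1 ^ (n + n).+1 <= 2 ^ (n./2 * n./2).
Proof.
move=> n_ge; set k := n./2; set j := n %/ 64.
have n_half : k + k <= n <= k + k + 1.
  by move: (odd_double_half n); rewrite -/k -addnn; case: (odd n) => /=; lia.
have j_ge : 10 <= j by apply: (@leq_div2r 64 640).
have n_lt : n < 64 * j.+1 by rewrite mulnC ltn_ceil.
have j_le : 64 * j <= n by rewrite mulnC leq_divM.
apply: (@leq_trans ((2 ^ j) ^ (n + n).+1)).
  by rewrite leq_exp2r // (leq_trans _ (exp2_ge_64_succn j_ge)).
by rewrite -expnM leq_exp2l //; nia.
Qed.

Lemma card_Deg_unique_classes_small n : 640 <= n ->
  #|Deg_unique_classes n| * n.+1 <= #|iso_classes n|.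
Proof.
move=> n_ge; have n_gt0 : 0 < n by rewrite (leq_trans _ n_ge).
rewrite -(@leq_pmul2r (2 ^ (n./2 * n./2))) ?expn_gt0 //.
have classes_lb : 2 ^ (n./2 * n./2) <= #|iso_classes n| * n.+1 ^ n.
  apply: leq_trans (card_simple_graphs_ge n) _.
  apply: leq_trans (card_simple_graphs_le n) _.
  by rewrite leq_mul2l leq_exp2r // leqnSn orbT.
have U_le := leq_mul (card_Deg_unique_classes_le n) (leqnn n.+1).
apply: leq_trans (leq_mul U_le classes_lb) _.
rewrite mulnCA leq_mul2l; apply/orP; right.
apply: leq_trans (exp_succn_le_exp2_half_sq n_ge).
by rewrite -expnSr -expnD; apply: leq_pexp2l => //; lia.
Qed.

Local Open Scope classical_set_scope.
Local Open Scope ring_scope.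

Theorem theorem1 (R : realType) :
  (fun n : nat => (#|Deg_unique_classes n|%:R / #|iso_classes n|%:R : R))
    @ \oo --> 0.
Proof.
apply: (@squeeze_cvgr _ _ _ _ (fun=> (0:R)) (@harmonic R)); last 2 first.
- exact: (@cvg_cst _ 0 nat \oo).
- exact: cvg_harmonic.
exists 640%N => // n /= n_ge.
have classes_pos : (0 : R) < #|iso_classes n|%:R by rewrite ltr0n iso_classes_gt0.
rewrite divr_ge0 ?ler0n //= ler_pdivrMr // ler_pdivlMl ?ltr0n //.
by rewrite -natrM ler_nat mulnC; apply: card_Deg_unique_classes_small.
Qed.
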